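(* Let $N\ge3$ and $\widetilde\psi\in\mathbb{Q}\langle\langle\widetilde X\rangle\rangle$. Then $\mathcal F\circ\tilde d_{\widetilde\psi}=d_{\mathcal F(\widetilde\psi)}\circ\mathcal F$ as maps $\mathbb{Q}(\mu_N)\langle\langle\widetilde X\rangle\rangle\to\mathbb{Q}(\mu_N)\langle\langle X\rangle\rangle$ (where $\tilde d_{\widetilde\psi}$ and $d_{\mathcal F(\widetilde\psi)}$ are extended $\mathbb{Q}(\mu_N)$-linearly).
   Context: $\zeta_N=\exp(2\pi i/N)$, $\mu_N$ the complex $N$-th roots of unity, $\iota:\{1,\dots,N\}\to\mathbb{Z}/N\mathbb{Z}$ the residue-class bijection. $K\langle\langle\mathcal L\rangle\rangle$: noncommutative formal power series over $\mathcal L$. Alphabets $X=\{x_0\}\cup\{x_\zeta:\zeta\in\mu_N\}$, $\widetilde X=\{\tilde x\}\cup\{\tilde x_\alpha:\alpha\in\mathbb{Z}/N\mathbb{Z}\}$. $\mathcal F$ is the continuous $\mathbb{Q}(\mu_N)$-algebra isomorphism $\tilde x\mapsto x_0$, $\tilde x_\alpha\mapsto\sum_{m=1}^N\zeta_N^{-m\iota^{-1}(\alpha)}x_{\zeta_N^m}$. For $\zeta\in\mu_N$, $t_\zeta$ is the algebra automorphism $x_0\mapsto x_0$, $x_\eta\mapsto x_{\zeta\eta}$; for $\psi\in\mathbb{Q}(\mu_N)\langle\langle X\rangle\rangle$, $d_\psi$ is the continuous derivation with $x_0\mapsto0$, $x_\zeta\mapsto[x_\zeta,t_\zeta(\psi)]$.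 For $a\in\{1,\dots,N\}$, $\tilde t_a$ is the algebra automorphism $\tilde x\mapsto\tilde x$, $\tilde x_\alpha\mapsto\zeta_N^{a\iota^{-1}(\alpha)}\tilde x_\alpha$, and $\widetilde T_a=\frac1N\sum_{m=1}^N\zeta_N^{-ma}\tilde t_m$. For $\widetilde\psi\in\mathbb{Q}\langle\langle\widetilde X\rangle\rangle$, $\tilde d_{\widetilde\psi}$ is the continuous derivation with $\tilde x\mapsto0$, $\tilde x_\alpha\mapsto\widetilde T_{\iota^{-1}(\alpha)}\big([\sum_{\beta\in\mathbb{Z}/N\mathbb{Z}}\tilde x_\beta,\widetilde\psi]\big)$. *)

(* Coefficients: algC (algebraic complex numbers), which
   contains Q(mu_N); Q and Q(mu_N) are carved out by predicates. *)
From HB Require Import structures.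
From mathcomp Require Import all_boot all_order all_algebra all_field.
Set Implicit Arguments. Unset Strict Implicit. Unset Printing Implicit Defensive.
Import Order.TTheory GRing.Theory Num.Theory.
Local Open Scope ring_scope.

(* zeta_N = exp(2 pi i / N): N.-root (-1) is the N-th root of -1 of minimal
   argument, i.e. exp(i pi / N); its square is exp(2 pi i / N). *)
Definition zetaN (N : nat) : algC := (N.-root (-1)) ^+ 2.

Definition inQmuN (N : nat) (x : algC) : Prop :=
  exists p : {poly rat}, x = (map_poly ratr p).[zetaN N].

(* Noncommutative formal power series over the finite alphabet L with
   coefficients in algC: functions from words to coefficients. *)
Definition ser (L : finType) := seq L -> algC.

Section Series.
Variable L : finType.

Definition sadd (f g : ser L) : ser L := fun w => f w + g w.
Definition sopp (f : ser L) : ser L := fun w => - f w.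
Definition sscale (c : algC) (f : ser L) : ser L := fun w => c * f w.
Definition szero : ser L := fun _ => 0.
Definition sone : ser L := fun w => (w == [::])%:R.
Definition sletter (a : L) : ser L := fun w => (w == [:: a])%:R.
Definition smul (f g : ser L) : ser L :=
  fun w => \sum_(i < (size w).+1) f (take i w) * g (drop i w).
Definition scomm (f g : ser L) : ser L := sadd (smul f g) (sopp (smul g f)).
Definition sprod (fs : seq (ser L)) : ser L := foldr smul sone fs.
Definition ssum (I : finType) (F : I -> ser L) : ser L :=
  fun w => \sum_(i : I) F i w.

End Series.

(* The continuous derivation D with prescribed values on letters:
   D(a_1...a_k) = sum_i a_1..a_{i-1} D(a_i) a_{i+1}..a_k, extended by
   continuity/linearity.  A word of length k only contributes to
   coefficients of words of length >= k-1, hence the finite sum below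
   (over words of length <= |v|+1) is the coefficient at v of the
   convergent infinite sum. *)
Definition sderiv (L : finType) (D : L -> ser L) (f : ser L) : ser L :=
  fun v => \sum_(k < (size v).+2) \sum_(t : k.-tuple L)
     f t * \sum_(i < k)
        sprod (map (@sletter L) (take i t) ++ D (tnth t i)
                 :: map (@sletter L) (drop i.+1 t)) v.

(* continuous algebra morphism ser L1 -> ser L2 given by phi on letters,
   where every phi a has zero constant term (so a word of length k only
   contributes to coefficients of words of length >= k). *)
Definition ssubst (L1 L2 : finType) (phi : L1 -> ser L2) (f : ser L1) : ser L2 :=
  fun v => \sum_(k < (size v).+1) \sum_(t : k.-tuple L1)
     f t * sprod (map phi t) v.

(* X = {x_0} u {x_zeta : zeta in mu_N}: letter [None] is x_0 and
   [Some k] (k : 'I_N) is x_{zeta_N^k}.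
   Xt = {xt} u {xt_alpha : alpha in Z/NZ}: [None] is xt and [Some alpha]
   is xt_alpha, the residue class alpha being represented by 0 <= alpha < N. *)
Definition alphX (N : nat) := option 'I_N.
Definition alphXt (N : nat) := option 'I_N.

Definition xz (N : nat) (m : nat) : alphX N := insub (m %% N)%N.

Definition iota_inv (N : nat) (alpha : 'I_N) : nat :=
  if val alpha == 0%N then N else val alpha.

Definition calF_letter (N : nat) (b : alphXt N) : ser (alphX N) :=
  match b with
  | None => sletter (None : alphX N)
  | Some alpha => fun w => \sum_(1 <= m < N.+1)
        (zetaN N) ^- (m * iota_inv alpha)%N * sletter (xz N m) w
  end.
Definition calF (N : nat) : ser (alphXt N) -> ser (alphX N) :=
  ssubst (@calF_letter N).

Definition t_zeta (N : nat) (k : 'I_N) : ser (alphX N) -> ser (alphX N) :=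
  ssubst (fun a : alphX N => match a with
                  | None => sletter (None : alphX N)
                  | Some j => sletter (xz N (val k + val j)%N)
                  end).

Definition d_psi (N : nat) (psi : ser (alphX N)) : ser (alphX N) -> ser (alphX N) :=
  sderiv (fun a : alphX N => match a with
                  | None => @szero (alphX N)
                  | Some k => scomm (sletter (Some k)) (t_zeta k psi)
                  end).

Definition tt_a (N : nat) (a : nat) : ser (alphXt N) -> ser (alphXt N) :=
  ssubst (fun b : alphXt N => match b with
                  | None => sletter (None : alphXt N)
                  | Some alpha =>
                      sscale ((zetaN N) ^+ (a * iota_inv alpha)%N) (sletter (Some alpha))
                  end).

Definition Tt_a (N : nat) (a : nat) (f : ser (alphXt N)) : ser (alphXt N) :=
  fun w => N%:R^-1 * \sum_(1 <= m < N.+1) (zetaN N) ^- (m * a)%N * tt_a m f w.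

Definition dt_psi (N : nat) (psi : ser (alphXt N)) : ser (alphXt N) -> ser (alphXt N) :=
  sderiv (fun b : alphXt N => match b with
                  | None => @szero (alphXt N)
                  | Some alpha =>
                      Tt_a (iota_inv alpha)
                        (scomm (ssum (fun beta : 'I_N => sletter (Some beta : alphXt N))) psi)
                  end).

From mathcomp Require Import all_boot all_order all_algebra all_field.
From mathcomp Require Import ring zify.
From Stdlib Require Import FunctionalExtensionality.
Set Implicit Arguments. Unset Strict Implicit. Unset Printing Implicit Defensive.
Import Order.TTheory GRing.Theory Num.Theory.
Local Open Scope ring_scope.

(* Every operator in play sends a series f to v |-> sum_t f(t) K(t)(v) for a
   kernel K on words: substitutions have kernel t |-> phi(t_1)...phi(t_k), and
   a derivation D has kernel t |-> D(t), the Leibniz expansion of D on a word.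
   A substitution F intertwines two derivations as soon as it does so on
   letters, since both composites are then derivations along F that agree on
   generators.  For the letter xt_alpha, F o tt_a = t_(zeta^a) o F and
   F(sum_beta xt_beta) = N x_1 reduce the identity to the orthogonality of the
   characters of Z/NZ, which holds because zeta_N is a primitive N-th root of
   unity.  With zeta_N = (N.-root (-1))^2 the latter is a statement about the
   root of -1 of largest real part: if the order m of zeta_N were a proper
   divisor of N, then r = N.-root (-1) would satisfy r^m = -1, and some
   (N/m)-th root of r, again an N-th root of -1, would lie closer to 1. *)

(** * Sums over words *)

Section Words.
Variable L : finType.
Implicit Types (f g h : ser L) (t s u v w : seq L) (F G : seq L -> algC).

Lemma ser_ext f g : (forall w, f w = g w) -> f = g.
Proof. exact: functional_extensionality. Qed.

Definition word t : ser L := fun w => (w == t)%:R.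

Definition wsum n F : algC := \sum_(k < n.+1) \sum_(t : k.-tuple L) F t.

Lemma eq_wsum n F G : (forall w, F w = G w) -> wsum n F = wsum n G.
Proof. by move=> eFG; apply: eq_bigr => k _; apply: eq_bigr. Qed.

Lemma eq_in_wsum n F G :
  (forall w, (size w <= n)%N -> F w = G w) -> wsum n F = wsum n G.
Proof.
move=> eFG; apply: eq_bigr => k _; apply: eq_bigr => t _.
by apply: eFG; rewrite size_tuple -ltnS.
Qed.

Lemma wsum_sum (I : Type) (r : seq I) (P : pred I) n (F : I -> seq L -> algC) :
  \sum_(i <- r | P i) wsum n (F i) = wsum n (fun w => \sum_(i <- r | P i) F i w).
Proof. by rewrite exchange_big; apply: eq_bigr => k _; rewrite exchange_big. Qed.

Lemma wsumMl n c F : c * wsum n F = wsum n (fun w => c * F w).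
Proof. by rewrite mulr_sumr; apply: eq_bigr => k _; rewrite mulr_sumr. Qed.

Lemma wsumMr n c F : wsum n F * c = wsum n (fun w => F w * c).
Proof. by rewrite mulr_suml; apply: eq_bigr => k _; rewrite mulr_suml. Qed.

Lemma wsumD n F G : wsum n F + wsum n G = wsum n (fun w => F w + G w).
Proof. by rewrite -big_split; apply: eq_bigr => k _; rewrite -big_split. Qed.

Lemma wsumN n F : - wsum n F = wsum n (fun w => - F w).
Proof. by rewrite -sumrN; apply: eq_bigr => k _; rewrite -sumrN. Qed.

Lemma wsum_widen n m F : (m <= n)%N -> (forall w, (m < size w)%N -> F w = 0) ->
  wsum n F = wsum m F.
Proof.
move=> le_mn F0; rewrite /wsum.
rewrite [RHS](big_ord_widen n.+1 (fun k => \sum_(t : k.-tuple L) F t)) ?ltnS //.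
rewrite (bigID (fun k : 'I_n.+1 => (k < m.+1)%N)) /= [X in _ + X]big1 ?addr0 // => k.
by rewrite ltnS -ltnNge => lt_mk; apply: big1 => t _; rewrite F0 ?size_tuple.
Qed.

Lemma tuple_sum_delta k w F :
  \sum_(t : k.-tuple L) F t * (tval t == w)%:R = if size w == k then F w else 0.
Proof.
case: eqP => [<-|szw].
  rewrite (bigD1 (in_tuple w)) //= eqxx mulr1 big1 ?addr0 // => t /eqP neq_tw.
  by case: eqP => [e|]; rewrite ?mulr0 //; case: neq_tw; apply: val_inj.
apply: big1 => t _; case: eqP => [e|_]; last by rewrite mulr0.
by rewrite -e size_tuple in szw.
Qed.

Lemma wsum_delta n w F : ((n < size w)%N -> F w = 0) ->
  wsum n (fun t => F t * word w t) = F w.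
Proof.
move=> Fw0; rewrite /wsum (eq_bigr _ (fun (k : 'I_n.+1) _ => tuple_sum_delta k w F)).
case: (leqP (size w) n) => [le_wn|lt_nw]; last first.
  by rewrite Fw0 //; apply: big1 => k _; case: eqP.
rewrite -ltnS in le_wn; rewrite (bigD1 (Ordinal le_wn)) //= eqxx big1 ?addr0 // => k ne_k.
by case: eqP => // e; case/eqP: ne_k; apply: val_inj.
Qed.

Lemma wsum_word n f v : (size v <= n)%N -> wsum n (fun t => f t * word t v) = f v.
Proof.
move=> le_vn; under eq_wsum => t do rewrite /word eq_sym -/(word v t).
by apply: wsum_delta; rewrite ltnNge le_vn.
Qed.

Lemma wsum_prefix n v F : (size v <= n)%N ->
  wsum n (fun t => F t * (take (size t) v == t)%:R) =
  \sum_(i < (size v).+1) F (take i v).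
Proof.
move=> le_vn; rewrite (wsum_widen le_vn) => [|t lt_vt]; last first.
  rewrite take_oversize ?(ltnW lt_vt) //; case: eqP => [e|_]; last by rewrite mulr0.
  by rewrite e ltnn in lt_vt.
apply: eq_bigr => k _; under eq_bigr => t _ do rewrite size_tuple eq_sym.
by rewrite tuple_sum_delta size_takel ?eqxx // -ltnS.
Qed.

End Words.

Lemma exchange_wsum (L1 L2 : finType) n m (F : seq L1 -> seq L2 -> algC) :
  wsum n (fun t => wsum m (F t)) = wsum m (fun u => wsum n (fun t => F t u)).
Proof.
transitivity (\sum_(k < n.+1) wsum m (fun u => \sum_(t : k.-tuple L1) F t u)).
  by apply: eq_bigr => k _; rewrite wsum_sum.
by rewrite wsum_sum.
Qed.

Section CauchyProduct.
Variable L : finType.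
Implicit Types (f g h : ser L) (t s u v w : seq L) (a : L).

Lemma smul_wordl t g w :
  smul (word t) g w = (take (size t) w == t)%:R * g (drop (size t) w).
Proof.
rewrite /smul /word; case: (leqP (size t) (size w)) => [le_tw|lt_wt].
  rewrite -ltnS in le_tw; rewrite (bigD1 (Ordinal le_tw)) //= big1 ?addr0 // => i ne_i.
  case: eqP => [e|_]; last by rewrite mul0r.
  by case/eqP: ne_i; apply: val_inj; rewrite /= -e size_takel // -ltnS.
have take_neq i : take i w != t.
  by apply/eqP => e; move: lt_wt; rewrite -e size_take_min ltnNge geq_minr.
by rewrite big1 => [|i _]; rewrite (negbTE (take_neq _)) mul0r.
Qed.

Lemma smul1l f : smul (@sone L) f = f.
Proof. by apply: ser_ext => w; rewrite (smul_wordl [::]) take0 drop0 mul1r. Qed.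

Lemma smul1r f : smul f (@sone L) = f.
Proof.
apply: ser_ext => w; rewrite /smul big_ord_recr /= take_size drop_size /sone eqxx mulr1.
rewrite big1 ?add0r // => i _; case: eqP => [e|_]; last by rewrite mulr0.
by move/(congr1 size): e; rewrite size_drop /=; have := ltn_ord i; lia.
Qed.

Lemma smul_word t s : smul (word t) (word s) = word (t ++ s).
Proof.
apply: ser_ext => w; rewrite smul_wordl /word.
have [->|ne_w] := eqVneq w (t ++ s).
  by rewrite take_size_cat // drop_size_cat // !eqxx mulr1.
case: eqP => [e1|_]; last by rewrite mul0r.
case: eqP => [e2|_]; last by rewrite mulr0.
by case/eqP: ne_w; rewrite -(cat_take_drop (size t) w) e1 e2.
Qed.

Lemma sprod_letters t : sprod (map (@sletter L) t) = word t.
Proof. by elim: t => [//|a t IH]; rewrite /= IH (smul_word [:: a]). Qed.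

Lemma smul0r f : smul (@szero L) f = @szero L.
Proof. by apply: ser_ext => w; apply: big1 => i _; rewrite mul0r. Qed.

Lemma smulr0 f : smul f (@szero L) = @szero L.
Proof. by apply: ser_ext => w; apply: big1 => i _; rewrite mulr0. Qed.

Lemma smulDl f g h : smul (sadd f g) h = sadd (smul f h) (smul g h).
Proof. by apply: ser_ext => w; rewrite /sadd -big_split; apply: eq_bigr => i _; rewrite mulrDl. Qed.

Lemma smulDr f g h : smul f (sadd g h) = sadd (smul f g) (smul f h).
Proof. by apply: ser_ext => w; rewrite /sadd -big_split; apply: eq_bigr => i _; rewrite mulrDr. Qed.

Lemma smulZl c f g : smul (sscale c f) g = sscale c (smul f g).
Proof. by apply: ser_ext => w; rewrite /sscale mulr_sumr; apply: eq_bigr => i _; rewrite mulrA. Qed.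

Lemma smulZr c f g : smul f (sscale c g) = sscale c (smul f g).
Proof.
by apply: ser_ext => w; rewrite /sscale mulr_sumr; apply: eq_bigr => i _; rewrite mulrCA.
Qed.

Lemma smul_sumr (I : Type) (r : seq I) (P : pred I) f (F : I -> ser L) w :
  smul f (fun x => \sum_(i <- r | P i) F i x) w = \sum_(i <- r | P i) smul f (F i) w.
Proof. by rewrite /smul exchange_big; apply: eq_bigr => j _; rewrite mulr_sumr. Qed.

Lemma smul_wsum n f g v : (size v <= n)%N ->
  smul f g v = wsum n (fun t => wsum n (fun s => f t * g s * word (t ++ s) v)).
Proof.
move=> le_vn; have split_v t : wsum n (fun s => f t * g s * word (t ++ s) v) =
    f t * g (drop (size t) v) * (take (size t) v == t)%:R.
  under eq_wsum => s.
    have -> : word (t ++ s) v = (take (size t) v == t)%:R * word (drop (size t) v) s.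
      rewrite /word.
      have -> : (v == t ++ s) = (take (size t) v == t) && (s == drop (size t) v).
        apply/eqP/andP => [->|[/eqP e1 /eqP e2]]; last first.
          by rewrite -(cat_take_drop (size t) v) e1 e2.
        by rewrite take_size_cat // drop_size_cat.
      by rewrite -natrM mulnb.
    rewrite mulrA mulrAC.
    over.
  by rewrite -wsumMr wsum_delta // size_drop ltnNge (leq_trans (leq_subr _ _) le_vn).
rewrite (eq_wsum _ split_v) wsum_prefix //; apply: eq_bigr => i _.
by rewrite size_takel // -ltnS.
Qed.

Lemma wsum_smul n f g (k : seq L -> algC) : (forall u, (n < size u)%N -> k u = 0) ->
  wsum n (fun u => smul f g u * k u) =
  wsum n (fun t => wsum n (fun s => f t * g s * k (t ++ s))).
Proof.
move=> k0; under eq_in_wsum => u le_un do rewrite (smul_wsum _ _ le_un) wsumMr.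
rewrite exchange_wsum; apply: eq_wsum => t.
under eq_wsum => u do rewrite wsumMr.
rewrite exchange_wsum; apply: eq_wsum => s.
under eq_wsum => u do rewrite mulrAC.
by rewrite wsum_delta // => /k0 ->; rewrite mulr0.
Qed.

Lemma smulA f g h : smul (smul f g) h = smul f (smul g h).
Proof.
apply: ser_ext => v; set n := size v; have le_vn : (size v <= n)%N by [].
have word_out t : (n < size t)%N -> word t v = 0.
  by move=> lt_nt; rewrite /word; case: eqP => // e; rewrite /n e ltnn in lt_nt.
rewrite !(smul_wsum _ _ le_vn) exchange_wsum.
under eq_wsum => r.
  under eq_wsum => u do rewrite mulrAC -mulrA.
  rewrite wsum_smul => [|u lt_nu]; last by rewrite word_out ?mul0r // size_cat ltn_addr.
  over.
rewrite exchange_wsum; apply: eq_wsum => t; rewrite exchange_wsum.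
under [RHS]eq_wsum => u do rewrite -mulrA mulrCA.
rewrite wsum_smul => [|u lt_nu]; last by rewrite word_out ?mulr0 // size_cat ltn_addl.
by apply: eq_wsum => s; apply: eq_wsum => r; rewrite catA; ring.
Qed.

End CauchyProduct.

Definition vanish_below (L : finType) n (f : ser L) := forall w, (size w < n)%N -> f w = 0.

Lemma vanish_below_smul (L : finType) n m (f g : ser L) :
  vanish_below n f -> vanish_below m g -> vanish_below (n + m) (smul f g).
Proof.
move=> f0 g0 w lt_w; apply: big1 => i _.
case: (ltnP (minn i (size w)) n) => [lt_in|le_ni].
  by rewrite f0 ?mul0r ?size_take_min.
by rewrite g0 ?mulr0 // size_drop; move: lt_w le_ni; lia.
Qed.

Lemma word_vanish (L : finType) (t : seq L) : vanish_below (size t) (word t).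
Proof. by move=> w lt_wt; rewrite /word; case: eqP => // e; rewrite e ltnn in lt_wt. Qed.

Lemma scommZl (L : finType) c (f g : ser L) : scomm (sscale c f) g = sscale c (scomm f g).
Proof. by rewrite /scomm smulZl smulZr; apply: ser_ext => w; rewrite /sadd /sopp /sscale; ring. Qed.

(** * Kernel operators, substitutions and derivations *)

Section KernelOperators.
Variables L1 L2 : finType.
Implicit Types (f g : ser L1) (t s : seq L1) (u v : seq L2).
Implicit Types (K : seq L1 -> ser L2) (B : seq L2 -> nat).

(* Only words t with |t| <= B v are summed; this loses nothing when K t v = 0
   for longer t, i.e. when K is [kernel_bounded] by B. *)
Definition kerop K B f : ser L2 := fun v => wsum (B v) (fun t => f t * K t v).

Definition kernel_bounded K B := forall t v, (B v < size t)%N -> K t v = 0.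

Lemma keropD K B f g : kerop K B (sadd f g) = sadd (kerop K B f) (kerop K B g).
Proof. by apply: ser_ext => v; rewrite /sadd wsumD; apply: eq_wsum => t; rewrite mulrDl. Qed.

Lemma keropN K B f : kerop K B (sopp f) = sopp (kerop K B f).
Proof. by apply: ser_ext => v; rewrite /sopp wsumN; apply: eq_wsum => t; rewrite mulNr. Qed.

Lemma keropZ K B c f : kerop K B (sscale c f) = sscale c (kerop K B f).
Proof. by apply: ser_ext => v; rewrite /sscale wsumMl; apply: eq_wsum => t; rewrite mulrA. Qed.

Lemma kerop0 K B : kerop K B (@szero L1) = @szero L2.
Proof. by apply: ser_ext => v; apply: big1 => k _; apply: big1 => t _; rewrite mul0r. Qed.

Lemma kerop_sum K B (I : Type) (r : seq I) (P : pred I) (F : I -> ser L1) :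
  kerop K B (fun w => \sum_(i <- r | P i) F i w) =
  fun v => \sum_(i <- r | P i) kerop K B (F i) v.
Proof. by apply: ser_ext => v; rewrite /kerop wsum_sum; apply: eq_wsum => t; rewrite mulr_suml. Qed.

Lemma keropE K B f v n : kernel_bounded K B -> (B v <= n)%N ->
  kerop K B f v = wsum n (fun t => f t * K t v).
Proof. by move=> KB le_Bn; rewrite /kerop (wsum_widen le_Bn) // => t /KB ->; rewrite mulr0. Qed.

Lemma kerop_word K B t : kernel_bounded K B -> kerop K B (word t) = K t.
Proof.
move=> KB; apply: ser_ext => v; rewrite /kerop.
by under eq_wsum => s do rewrite mulrC; rewrite wsum_delta // => /KB.
Qed.

Lemma kerop_smul K B f g v n : kernel_bounded K B -> (B v <= n)%N ->
  kerop K B (smul f g) v = wsum n (fun t => wsum n (fun s => f t * g s * K (t ++ s) v)).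
Proof.
move=> KB le_Bn; rewrite (keropE _ KB le_Bn) wsum_smul // => u.
by move/(leq_ltn_trans le_Bn)/KB.
Qed.

Lemma smul_kerop K1 B1 K2 B2 f g v n :
  kernel_bounded K1 B1 -> kernel_bounded K2 B2 ->
  (forall u, (size u <= size v)%N -> (B1 u <= n)%N && (B2 u <= n)%N) ->
  smul (kerop K1 B1 f) (kerop K2 B2 g) v =
  wsum n (fun t => wsum n (fun s => f t * g s * smul (K1 t) (K2 s) v)).
Proof.
move=> KB1 KB2 le_Bn; set m := size v.
have le_vm : (size v <= m)%N by [].
rewrite (smul_wsum _ _ le_vm).
under eq_in_wsum => u le_um.
  under eq_in_wsum => u' le_u'm.
    have /andP[le_B1n _] := le_Bn u le_um; have /andP[_ le_B2n] := le_Bn u' le_u'm.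
    rewrite (keropE _ KB1 le_B1n) (keropE _ KB2 le_B2n) !wsumMr.
    under eq_wsum => t do rewrite !wsumMl wsumMr.
    over.
  rewrite exchange_wsum.
  under eq_wsum => t do rewrite exchange_wsum.
  over.
rewrite exchange_wsum; apply: eq_wsum => t.
rewrite exchange_wsum; apply: eq_wsum => s.
rewrite (smul_wsum _ _ le_vm) wsumMl; apply: eq_wsum => u.
by rewrite wsumMl; apply: eq_wsum => u'; ring.
Qed.

End KernelOperators.

Lemma kerop_comp (L0 L1 L2 : finType) (K : seq L1 -> ser L2) (B : seq L2 -> nat)
    (K' : seq L0 -> ser L1) (B' : seq L1 -> nat) (h : ser L0) v n :
  kernel_bounded K' B' -> (B v <= n)%N -> (forall t, (size t <= B v)%N -> (B' t <= n)%N) ->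
  kerop K B (kerop K' B' h) v = wsum n (fun r => h r * kerop K B (K' r) v).
Proof.
move=> KB' le_Bn le_B'n; rewrite {1}/kerop.
under eq_in_wsum => t le_tB do rewrite (keropE _ KB' (le_B'n t le_tB)) wsumMr.
rewrite exchange_wsum; apply: eq_wsum => r.
by rewrite /kerop wsumMl; apply: eq_wsum => t; rewrite mulrA.
Qed.

Section IdentityKernel.
Variable L : finType.

Lemma kerop_id (f : ser L) : kerop (@word L) size f = f.
Proof. by apply: ser_ext => v; apply: wsum_word. Qed.

Lemma word_bounded : kernel_bounded (@word L) size.
Proof. by move=> t v; apply: word_vanish. Qed.

End IdentityKernel.

Section Substitution.
Variables (L1 L2 : finType) (phi : L1 -> ser L2).
Hypothesis phi0 : forall a, phi a [::] = 0.
Implicit Types (f g : ser L1) (t s : seq L1).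

Definition subst_word t : ser L2 := sprod (map phi t).

Lemma ssubstE : ssubst phi = kerop subst_word size.
Proof. by []. Qed.

Lemma subst_word_cat t s : subst_word (t ++ s) = smul (subst_word t) (subst_word s).
Proof.
elim: t => [|a t IH]; first exact/esym/smul1l.
by rewrite smulA -IH.
Qed.

Lemma subst_word_vanish t : vanish_below (size t) (subst_word t).
Proof.
elim: t => [|a t IH] //=; rewrite -add1n; apply: vanish_below_smul IH.
by case=> // /phi0.
Qed.

Lemma subst_word_bounded : kernel_bounded subst_word size.
Proof. by move=> t v; apply: subst_word_vanish. Qed.

Lemma ssubst_word t : ssubst phi (word t) = subst_word t.
Proof. exact: kerop_word subst_word_bounded. Qed.

Lemma ssubst_one : ssubst phi (@sone L1) = @sone L2.
Proof. exact: (ssubst_word [::]). Qed.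

Lemma ssubst_letter a : ssubst phi (sletter a) = phi a.
Proof. by rewrite (ssubst_word [:: a]) /subst_word /= smul1r. Qed.

Lemma ssubst_mul f g : ssubst phi (smul f g) = smul (ssubst phi f) (ssubst phi g).
Proof.
apply: ser_ext => v; rewrite ssubstE (kerop_smul _ _ subst_word_bounded (leqnn _)).
rewrite (smul_kerop (n := size v) _ _ subst_word_bounded subst_word_bounded) => [|u le_uv].
  by apply: eq_wsum => t; apply: eq_wsum => s; rewrite subst_word_cat.
by rewrite le_uv.
Qed.

Lemma ssubst_scomm f g : ssubst phi (scomm f g) = scomm (ssubst phi f) (ssubst phi g).
Proof. by rewrite /scomm ssubstE keropD keropN -ssubstE !ssubst_mul. Qed.

End Substitution.

Section Derivation.
Variables (L : finType) (D : L -> ser L).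
Implicit Types (f g : ser L) (t s : seq L) (a : L).

Fixpoint deriv_word t : ser L :=
  if t is a :: t' then sadd (smul (D a) (word t')) (smul (sletter a) (deriv_word t'))
  else @szero L.

Lemma deriv_word_nth x0 t :
  deriv_word t = fun v => \sum_(i < size t) sprod (map (@sletter L) (take i t) ++
                        D (nth x0 t i) :: map (@sletter L) (drop i.+1 t)) v.
Proof.
elim: t => [|a t IH]; apply: ser_ext => v; first by rewrite big_ord0.
rewrite big_ord_recl /= drop0 sprod_letters.
under eq_bigr => i _ do rewrite /= -/(sprod (_ :: _)).
by rewrite -smul_sumr -IH.
Qed.

Lemma sderivE : sderiv D = kerop deriv_word (fun v => (size v).+1).
Proof.
apply: functional_extensionality => f; apply: ser_ext => v.
apply: eq_bigr => k _; apply: eq_bigr => t _; congr (_ * _).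
(* [nth] needs a default letter, which exists unless L is empty. *)
case: (pickP (@predT L)) => [x0 _|L0].
  rewrite (deriv_word_nth x0) size_tuple.
  by apply: eq_bigr => i _; rewrite (tnth_nth x0).
rewrite big1 => [|i _]; last by have := L0 (tnth t i).
by case: t => [[|a s] szt] //; have := L0 a.
Qed.

Lemma deriv_word_vanish t : vanish_below (size t).-1 (deriv_word t).
Proof.
elim: t => [|a t IH] //= w lt_w; rewrite /sadd.
rewrite (@vanish_below_smul _ 0 (size t)) ?add0n //; last exact: word_vanish.
rewrite (@vanish_below_smul _ 1 (size t).-1) ?add0r //; first by case.
by move: lt_w; case: (size t).
Qed.

Lemma deriv_word_bounded : kernel_bounded deriv_word (fun v => (size v).+1).
Proof. by move=> t v lt_vt; apply: deriv_word_vanish; rewrite -ltnS (ltn_predK lt_vt). Qed.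

Lemma deriv_word_cat t s :
  deriv_word (t ++ s) = sadd (smul (deriv_word t) (word s)) (smul (word t) (deriv_word s)).
Proof.
elim: t => [|a t IH] /=.
  by rewrite smul0r smul1l; apply: ser_ext => w; rewrite /sadd add0r.
rewrite IH -(smul_word [:: a]) smulDr !smulDl !smulA smul_word.
by apply: ser_ext => w; rewrite /sadd addrA.
Qed.

Lemma sderiv_word t : sderiv D (word t) = deriv_word t.
Proof. by rewrite sderivE kerop_word //; apply: deriv_word_bounded. Qed.

Lemma sderiv_one : sderiv D (@sone L) = @szero L.
Proof. exact: (sderiv_word [::]). Qed.

Lemma sderiv_letter a : sderiv D (sletter a) = D a.
Proof.
rewrite (sderiv_word [:: a]) /= smulr0 smul1r.
by apply: ser_ext => w; rewrite /sadd addr0.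
Qed.

Lemma sderiv_mul f g :
  sderiv D (smul f g) = sadd (smul (sderiv D f) g) (smul f (sderiv D g)).
Proof.
apply: ser_ext => v; set n := (size v).+1.
have le_Bn (u : seq L) : (size u <= size v)%N -> ((size u).+1 <= n)%N && (size u <= n)%N.
  by move=> le_uv; rewrite ltnS le_uv leqW.
have le_nB (u : seq L) : (size u <= size v)%N -> (size u <= n)%N && ((size u).+1 <= n)%N.
  by move=> le_uv; rewrite ltnS le_uv leqW.
rewrite /sadd sderivE (kerop_smul _ _ deriv_word_bounded (leqnn _)).
rewrite -[in smul _ g](kerop_id g) -[in smul f _](kerop_id f).
rewrite (smul_kerop _ _ deriv_word_bounded (@word_bounded L) le_Bn).
rewrite (smul_kerop _ _ (@word_bounded L) deriv_word_bounded le_nB).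
rewrite wsumD; apply: eq_wsum => t; rewrite wsumD; apply: eq_wsum => s.
by rewrite deriv_word_cat /sadd mulrDr.
Qed.

End Derivation.

Section Composition.
Variables (L1 L2 : finType) (phi : L1 -> ser L2).
Hypothesis phi0 : forall a, phi a [::] = 0.

Lemma ssubst_comp (L3 : finType) (chi : L2 -> ser L3) (f : ser L1) :
  (forall b, chi b [::] = 0) ->
  ssubst chi (ssubst phi f) = ssubst (fun a => ssubst chi (phi a)) f.
Proof.
move=> chi0; have subst_wordK t :
    ssubst chi (subst_word phi t) = subst_word (fun a => ssubst chi (phi a)) t.
  by elim: t => [|a t IH]; [exact: ssubst_one | rewrite /= ssubst_mul // IH].
apply: ser_ext => v; rewrite {1}(ssubstE chi) (ssubstE phi).
rewrite (kerop_comp _ _ (subst_word_bounded phi0) (leqnn _)) // [in RHS]ssubstE {2}/kerop.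
by apply: eq_wsum => t; rewrite -(ssubstE chi) subst_wordK.
Qed.

Lemma ssubst_sderiv (D1 : L1 -> ser L1) (D2 : L2 -> ser L2) (f : ser L1) :
  (forall a, ssubst phi (D1 a) = sderiv D2 (phi a)) ->
  ssubst phi (sderiv D1 f) = sderiv D2 (ssubst phi f).
Proof.
move=> phiD; have deriv_wordK t :
    ssubst phi (deriv_word D1 t) = sderiv D2 (subst_word phi t).
  elim: t => [|a t IH] /=; first by rewrite ssubstE kerop0 sderiv_one.
  rewrite ssubstE keropD -ssubstE !ssubst_mul // ssubst_word // ssubst_letter // IH phiD.
  by rewrite sderiv_mul.
apply: ser_ext => v; have le_vn : (size v <= (size v).+1)%N by [].
rewrite {1}(ssubstE phi) (sderivE D1) (kerop_comp _ _ (deriv_word_bounded D1) le_vn) => [|t].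
  rewrite (sderivE D2) (ssubstE phi).
  rewrite (kerop_comp _ _ (subst_word_bounded phi0) (leqnn _)) => [|t //].
  by apply: eq_wsum => t; rewrite -ssubstE deriv_wordK sderivE.
by rewrite ltnS.
Qed.

End Composition.

(** * Primitivity of zeta_N *)

Lemma sum_expr_unity_root (R : idomainType) (y : R) q : y ^+ q = 1 -> y != 1 ->
  \sum_(i < q) y ^+ i = 0.
Proof.
move=> yq1 y_neq1; have /eqP : (y - 1) * \sum_(i < q) y ^+ i = 0.
  by rewrite -subrX1 yq1 subrr.
by rewrite mulf_eq0 subr_eq0 (negbTE y_neq1) => /eqP.
Qed.

Lemma normC_subr1 (C : numClosedFieldType) (z : C) : `|z - 1| ^+ 2 = `|z| ^+ 2 - 2 * 'Re z + 1.
Proof. by rewrite !normCK rmorphB rmorph1 ReE; field. Qed.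

Lemma norm_unity_root (R : numDomainType) (z : R) q : (0 < q)%N -> `|z| ^+ q = 1 -> `|z| = 1.
Proof. by move=> q_gt0 /eqP; rewrite pexpr_eq1 // => /eqP. Qed.

Lemma Re_rootC_max (C : numClosedFieldType) n (x y : C) :
  (0 < n)%N -> x \is Num.real -> y ^+ n = x ->
  'Re y <= 'Re (n.-root x).
Proof.
move=> n_gt0 x_real ynx.
case/orP: (real_leVge (Creal_Im y) (rpred0 _)) => [Im_le0|Im_ge0]; last exact: rootC_Re_max.
rewrite -Re_conj; apply: rootC_Re_max => //; last by rewrite Im_conj oppr_ge0.
by rewrite -rmorphXn ynx; apply: CrealP.
Qed.

Lemma sum_geom_prim_root (R : idomainType) q (w z0 : R) : q.-primitive_root w ->
  \sum_(k < q) \sum_(j < q) (z0 * w ^+ k) ^+ j = q%:R.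
Proof.
move=> w_prim; have q_gt0 := prim_order_gt0 w_prim.
under eq_bigr => k _ do under eq_bigr => j _ do rewrite exprMn -exprM mulnC exprM.
rewrite exchange_big /= (bigD1 (Ordinal q_gt0)) //= [X in _ + X]big1 => [|j j_neq0].
  rewrite addr0 (eq_bigr (fun _ => 1)) => [|k _]; first by rewrite sumr_const card_ord.
  by rewrite !expr0 mul1r expr1n.
rewrite -mulr_sumr sum_expr_unity_root ?mulr0 //.
  by rewrite exprAC (prim_expr_order w_prim) expr1n.
by rewrite -(expr0 w) (eq_prim_root_expr w_prim) mod0n modn_small.
Qed.

Lemma normC_sub1_unit (C : numClosedFieldType) (x : C) :
  `|x| = 1 -> `|x - 1| ^+ 2 = 2 * (1 - 'Re x).
Proof. by move=> x_norm; rewrite normC_subr1 x_norm expr1n; ring. Qed.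

Lemma norm_geom_sum_le1 (C : numClosedFieldType) q (z r : C) : (0 < q)%N ->
  `|r| = 1 -> r != 1 -> z ^+ q = r -> 'Re z <= 'Re r ->
  `|\sum_(j < q) z ^+ j| ^+ 2 <= 1.
Proof.
move=> q_gt0 r_norm r_neq1 zq le_zr.
have z_norm : `|z| = 1 by apply: (norm_unity_root q_gt0); rewrite -normrX zq.
have Re_r_lt1 : 0 < 1 - 'Re r.
  rewrite -(pmulr_rgt0 _ (ltr0n _ 2)) -normC_sub1_unit //.
  by rewrite exprn_gt0 // normr_gt0 subr_eq0.
have Re_z_lt1 : 0 < 1 - 'Re z by apply: lt_le_trans Re_r_lt1 _; rewrite lerD2l lerN2.
have S_norm : `|\sum_(j < q) z ^+ j| ^+ 2 * (1 - 'Re z) = 1 - 'Re r.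
  apply: (@mulfI _ 2); first by rewrite pnatr_eq0.
  by rewrite mulrCA -!normC_sub1_unit // -exprMn -normrM mulrC -subrX1 zq.
by rewrite -(ger_pMl _ Re_z_lt1) S_norm lerD2l lerN2.
Qed.

Lemma sum_norm_le1_eq_card (C : numClosedFieldType) q (S : 'I_q -> C) :
  (forall k, `|S k| ^+ 2 <= 1) -> \sum_k S k = q%:R -> forall k, S k = 1.
Proof.
move=> S_le1 sumS k; have dev_ge0 k' : 0 <= `|S k' - 1| ^+ 2 by rewrite exprn_ge0.
apply/eqP; rewrite -subr_eq0 -normr_eq0 -sqrf_eq0; apply/eqP.
apply: (@psumr_eq0P _ _ xpredT _ (fun k' _ => dev_ge0 k')) => //; apply/eqP.
rewrite eq_le sumr_ge0 // andbT.
apply: (@le_trans _ _ (\sum_k' (2 - 2 * 'Re (S k')))).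
  apply: ler_sum => k' _; rewrite -subr_ge0.
  have -> : 2 - 2 * 'Re (S k') - `|S k' - 1| ^+ 2 = 1 - `|S k'| ^+ 2.
    by rewrite normC_subr1; ring.
  by rewrite subr_ge0.
rewrite sumrB sumr_const card_ord -mulr_sumr -raddf_sum sumS.
by rewrite [X in 2 * X](Creal_ReP _ (realn _ _)) mulr_natr subrr.
Qed.

Lemma exists_rootC_Re_gt q (r : algC) : (1 < q)%N -> `|r| = 1 -> r != 1 ->
  exists z, z ^+ q = r /\ 'Re r < 'Re z.
Proof.
move=> q_gt1 r_norm r_neq1; have q_gt0 := ltnW q_gt1.
have [w w_prim] := C_prim_root_exists q_gt0.
pose z (k : 'I_q) := q.-root r * w ^+ k.
have zq k : z k ^+ q = r.
  by rewrite exprMn rootCK // exprAC (prim_expr_order w_prim) expr1n mulr1.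
suff /existsP[k lt_rz] : [exists k, 'Re r < 'Re (z k)] by exists (z k).
(* Otherwise every geometric sum S_k = sum_(j < q) z_k^j has norm at most 1
   while sum_k S_k = q, so S_k = 1 and z_k = r for all k. *)
apply: contraT; rewrite negb_exists => /forallP le_zr.
have S1 k : \sum_(j < q) z k ^+ j = 1.
  apply: (@sum_norm_le1_eq_card _ q (fun k => \sum_(j < q) z k ^+ j)) => [k'|].
    apply: (norm_geom_sum_le1 q_gt0 r_norm r_neq1 (zq k')).
    by rewrite real_leNgt ?Creal_Re ?le_zr.
  exact: sum_geom_prim_root.
have z_r k : z k = r.
  have := congr1 (fun s => (z k - 1) * s) (S1 k).
  by rewrite -subrX1 zq mulr1 => /addIr.
have r_neq0 : q.-root r != 0 by rewrite rootC_eq0 // -normr_eq0 r_norm oner_neq0.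
have /eqP := mulfI r_neq0 (etrans (z_r (Ordinal q_gt0)) (esym (z_r (Ordinal q_gt1)))).
by rewrite (eq_prim_root_expr w_prim) /= mod0n modn_small.
Qed.

Lemma zetaN_prim N : (0 < N)%N -> N.-primitive_root (zetaN N).
Proof.
move=> N_gt0; pose r : algC := N.-root (-1).
have rN : r ^+ N = -1 by rewrite rootCK.
have r_norm : `|r| = 1 by apply: (norm_unity_root N_gt0); rewrite -normrX rN normrN1.
have N1_neq1 : (-1 : algC) != 1 by rewrite lt_eqF // (lt_trans (ltrN10 _) ltr01).
have zN : zetaN N ^+ N = 1 by rewrite /zetaN -exprM mulnC exprM rN sqrrN expr1n.
have [m m_prim m_dvd] := prim_order_exists N_gt0 zN.
have [mN|m_neqN] := eqVneq m N; first by rewrite mN in m_prim.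
exfalso.
have m_gt0 := prim_order_gt0 m_prim.
set q := (N %/ m)%N; have Nqm : N = (q * m)%N by rewrite divnK.
have q_gt1 : (1 < q)%N.
  have q_neq0 : q != 0%N by apply: contraTneq N_gt0 => q0; rewrite Nqm q0.
  have q_neq1 : q != 1%N by apply: contra_neq m_neqN => q1; rewrite Nqm q1 mul1n.
  by case: (q) q_neq0 q_neq1 => [|[|]].
have rm : r ^+ m = -1.
  have /eqP : (r ^+ m) ^+ 2 = 1 by rewrite -exprM mulnC exprM (prim_expr_order m_prim).
  rewrite sqrf_eq1 => /orP[/eqP rm1|/eqP //].
  by move: rN; rewrite Nqm mulnC exprM rm1 expr1n => /eqP; rewrite eq_sym (negbTE N1_neq1).
have r_neq1 : r != 1 by apply: contra_eq_neq rN => ->; rewrite expr1n eq_sym N1_neq1.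
have [z [zq Re_rz]] := exists_rootC_Re_gt q_gt1 r_norm r_neq1.
have zN_N1 : z ^+ N = -1 by rewrite Nqm exprM zq rm.
have := Re_rootC_max N_gt0 (rpredN1 _) zN_N1.
by rewrite real_leNgt ?Creal_Re ?Re_rz.
Qed.

(** * The transform F on letters *)

Lemma sum_periodic_shift (G : nat -> algC) N k : (0 < N)%N ->
  (forall j, G (j + N)%N = G j) ->
  \sum_(1 <= j < N.+1) G (k + j)%N = \sum_(1 <= j < N.+1) G j.
Proof.
move=> N_gt0 G_per; elim: k => [//|k IH]; rewrite -{}IH.
pose H j := G (k + j)%N.
transitivity (\sum_(1 <= j < N.+1) H j.+1); first by apply: eq_bigr => j _; rewrite addSnnS.
rewrite big_nat_recr // [RHS](big_ltn (F := H)) ?ltnS // [in RHS]big_add1 /= addrC.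
by rewrite /H addnS -addSn G_per addn1.
Qed.

Section CyclotomicAlphabets.
Variable N : nat.
Hypothesis N_gt0 : (0 < N)%N.
Local Notation zeta := (zetaN N).

Lemma zetaN_expN : zeta ^+ N = 1.
Proof. exact: prim_expr_order (zetaN_prim N_gt0). Qed.

Lemma zetaN_neq0 : zeta != 0.
Proof. by rewrite (prim_root_eq0 (zetaN_prim N_gt0)) -lt0n. Qed.

Lemma zetaN_iota_inv j (b : 'I_N) : zeta ^+ (j * iota_inv b) = zeta ^+ (j * b).
Proof.
rewrite /iota_inv; case: eqP => [b0|_] //.
by rewrite b0 muln0 mulnC exprM zetaN_expN expr1n.
Qed.

Lemma sum_zetaN_iota_inv m : (0 < m <= N)%N ->
  \sum_(b : 'I_N) zeta ^- (m * iota_inv b) = (m == N)%:R * N%:R.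
Proof.
case/andP=> m_gt0 le_mN; under eq_bigr => b _ do rewrite zetaN_iota_inv exprM -exprVn.
have [-> | m_neqN] := eqVneq m N.
  rewrite zetaN_expN invr1 mul1r (eq_bigr (fun _ => 1)) => [|b _]; last exact: expr1n.
  by rewrite sumr_const card_ord.
rewrite mul0r (sum_expr_unity_root (q := N)) //.
  by rewrite exprVn -exprM mulnC exprM zetaN_expN expr1n invr1.
rewrite invr_eq1 -(expr0 zeta) (eq_prim_root_expr (zetaN_prim N_gt0)) mod0n modn_small.
  by rewrite -lt0n.
by rewrite ltn_neqAle m_neqN.
Qed.

Definition ord_mod m : 'I_N := Ordinal (ltn_pmod m N_gt0).

Lemma xz_mod m : xz N m = Some (ord_mod m).
Proof.
rewrite /xz; case: insubP => [k _ km|]; last by rewrite ltn_pmod.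
by congr Some; apply: val_inj.
Qed.

Lemma calF_letter0 (b : alphXt N) : calF_letter b [::] = 0.
Proof. by case: b => [alpha|] //=; apply: big1 => m _; rewrite mulr0. Qed.

Definition tt_letter a (b : alphXt N) : ser (alphXt N) :=
  match b with
  | None => sletter None
  | Some alpha => sscale (zeta ^+ (a * iota_inv alpha)) (sletter (Some alpha))
  end.

Definition tz_letter (k : 'I_N) (b : alphX N) : ser (alphX N) :=
  match b with
  | None => sletter None
  | Some j => sletter (xz N (val k + val j))
  end.

Lemma calFE : @calF N = ssubst (@calF_letter N). Proof. by []. Qed.
Lemma tt_aE a : tt_a a = ssubst (tt_letter a). Proof. by []. Qed.
Lemma t_zetaE k : t_zeta k = ssubst (tz_letter k). Proof. by []. Qed.

Lemma tt_letter0 a b : tt_letter a b [::] = 0.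
Proof. by case: b => [alpha|] //; rewrite /= /sscale mulr0. Qed.

Lemma tz_letter0 k b : tz_letter k b [::] = 0.
Proof. by case: b. Qed.

Lemma calF_letterE alpha : calF_letter (Some alpha) = fun w =>
  \sum_(1 <= m < N.+1) sscale (zeta ^- (m * iota_inv alpha)) (sletter (xz N m)) w.
Proof. by []. Qed.

Lemma t_zeta_letter a m : t_zeta (ord_mod a) (sletter (xz N m)) = sletter (xz N (a + m)).
Proof.
rewrite t_zetaE ssubst_letter; last exact: tz_letter0.
by rewrite xz_mod /= /xz modnDm.
Qed.

Lemma calF_tt_a a f : calF (tt_a a f) = t_zeta (ord_mod a) (calF f).
Proof.
rewrite /calF tt_aE t_zetaE (ssubst_comp (tt_letter0 a) f calF_letter0).
rewrite (ssubst_comp calF_letter0 f (tz_letter0 _)).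
congr (ssubst _ f); apply: functional_extensionality => -[alpha|]; last first.
  by rewrite /= (ssubst_letter calF_letter0) (ssubst_letter (tz_letter0 _)).
rewrite /= ssubstE keropZ -ssubstE (ssubst_letter calF_letter0).
rewrite calF_letterE ssubstE kerop_sum; apply: ser_ext => v /=.
under eq_bigr => m _ do rewrite keropZ -ssubstE -t_zetaE t_zeta_letter.
pose G j := zeta ^- (j * iota_inv alpha) * sletter (xz N j) v.
have G_per j : G (j + N)%N = G j.
  by rewrite /G /xz modnDr mulnDl exprD [zeta ^+ (N * _)]exprM zetaN_expN expr1n mulr1.
rewrite /sscale -(sum_periodic_shift a N_gt0 G_per) mulr_sumr; apply: eq_bigr => m _.
rewrite /G mulrA mulnDl exprD invfM mulrA mulfV ?mul1r //.
by rewrite expf_neq0 ?zetaN_neq0.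
Qed.

Lemma calF_sum_letters :
  calF (ssum (fun b : 'I_N => sletter (Some b : alphXt N))) = sscale N%:R (sletter (xz N N)).
Proof.
apply: ser_ext => v; rewrite /calF ssubstE /ssum kerop_sum /sscale.
under eq_bigr => b _ do rewrite -ssubstE (ssubst_letter calF_letter0) /=.
rewrite exchange_big /=; under eq_bigr => m _ do rewrite -mulr_suml.
rewrite big_nat_recr // sum_zetaN_iota_inv ?N_gt0 ?leqnn // eqxx mul1r.
rewrite big_nat big1 => [|m /andP[m_gt0 lt_mN]]; first exact: add0r.
have m_range : (0 < m <= N)%N by rewrite m_gt0 ltnW.
by rewrite (sum_zetaN_iota_inv m_range) (ltn_eqF lt_mN) mul0r mul0r.
Qed.

Definition dt_letter (psit : ser (alphXt N)) (b : alphXt N) : ser (alphXt N) :=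
  match b with
  | None => @szero (alphXt N)
  | Some alpha => Tt_a (iota_inv alpha)
      (scomm (ssum (fun beta : 'I_N => sletter (Some beta : alphXt N))) psit)
  end.

Definition d_letter (psi : ser (alphX N)) (a : alphX N) : ser (alphX N) :=
  match a with
  | None => @szero (alphX N)
  | Some k => scomm (sletter (Some k)) (t_zeta k psi)
  end.

Lemma Tt_aE a (f : ser (alphXt N)) : Tt_a a f =
  sscale N%:R^-1 (fun w => \sum_(1 <= m < N.+1) sscale (zeta ^- (m * a)) (tt_a m f) w).
Proof. by []. Qed.

Lemma t_zeta_calF_scomm (psit : ser (alphXt N)) m :
  t_zeta (ord_mod m) (calF (scomm (ssum (fun b : 'I_N => sletter (Some b : alphXt N))) psit)) =
  sscale N%:R (scomm (sletter (xz N m)) (t_zeta (ord_mod m) (calF psit))).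
Proof.
rewrite calFE (ssubst_scomm calF_letter0) -calFE calF_sum_letters scommZl.
rewrite t_zetaE ssubstE keropZ -ssubstE (ssubst_scomm (tz_letter0 _)) -t_zetaE.
by rewrite t_zeta_letter /xz modnDr.
Qed.

Lemma calF_dt_letter (psit : ser (alphXt N)) b :
  calF (dt_letter psit b) = sderiv (d_letter (calF psit)) (calF_letter b).
Proof.
case: b => [alpha|]; first last.
  by rewrite /= sderiv_letter calFE ssubstE kerop0.
rewrite calF_letterE /=; apply: ser_ext => v.
rewrite Tt_aE [in LHS]calFE ssubstE keropZ kerop_sum sderivE kerop_sum /sscale.
under eq_bigr => m _ do rewrite keropZ -ssubstE -calFE calF_tt_a t_zeta_calF_scomm.
under [RHS]eq_bigr => m _ do rewrite keropZ -sderivE sderiv_letter.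
rewrite mulr_sumr; apply: eq_bigr => m _; rewrite /sscale xz_mod /=.
by field; rewrite expf_neq0 ?zetaN_neq0 //= pnatr_eq0 -lt0n N_gt0.
Qed.

End CyclotomicAlphabets.

Unset Implicit Arguments.

Theorem proposition3p9 (N : nat) (hN : (3 <= N)%N)
  (psit : ser (alphXt N)) (hpsit : forall w, psit w \in Crat) :
  forall f : ser (alphXt N), (forall w, @inQmuN N (f w)) ->
    @calF N (@dt_psi N psit f) = @d_psi N (@calF N psit) (@calF N f).
Proof.
have N_gt0 : (0 < N)%N by apply: leq_trans hN.
move=> f _.
exact: (ssubst_sderiv (@calF_letter0 N) f (calF_dt_letter N_gt0 psit)).
Qed.
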